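(* Let $M$ be a compact complex manifold with Kobayashi pseudodistance $d_M$. Then for every $x\in M$ the equivalence class $M_x=\{y\in M: d_M(x,y)=0\}$ is connected.
   Context: The Kobayashi pseudometric $d_M$ is the largest pseudometric on $M$ such that every holomorphic map from the unit disk with its Poincaré metric to $(M,d_M)$ is distance-decreasing. *)

From HB Require Import structures.
From mathcomp Require Import all_boot all_order all_algebra.
From mathcomp Require Import all_classical all_reals all_analysis.
From mathcomp Require Import complex.
Import Order.TTheory GRing.Theory Num.Theory numFieldNormedType.Exports.

Set Implicit Arguments.
Unset Strict Implicit.
Unset Printing Implicit Defensive.

Local Open Scope ring_scope.
Local Open Scope classical_set_scope.

(* The complex numbers are R[i] = complex R for R : realType; they are a
   normed field, and the (regular) normed space R[i]^o over R[i] is used as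
   the domain of holomorphic maps of one variable, while 'rV[R[i]]_n is C^n.
   "differentiable" over the field R[i] is complex (Frechet) differentiability,
   i.e. holomorphy. *)

Definition Cn (R : realType) (n : nat) : normedModType R[i] := 'rV[R[i]]_n.

Definition unit_disk (R : realType) : set (R[i])^o :=
  [set z | Normc.normc (z : R[i]) < 1].
Arguments unit_disk R : clear implicits.

Definition poincare_dist (R : realType) (z w : (R[i])^o) : R :=
  let t := Normc.normc ((z : R[i]) - w) / Normc.normc (1 - (w : R[i])^* * z) in
  ln ((1 + t) / (1 - t)).

Record cplx_atlas (R : realType) (T : topologicalType) (n : nat) := CplxAtlas {
  chart_index : Type;
  chart_dom : chart_index -> set T;
  chart_map : chart_index -> T -> Cn R n }.
Arguments chart_index {R T n} _.
Arguments chart_dom {R T n} _ _.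
Arguments chart_map {R T n} _ _.

Definition is_cplx_atlas (R : realType) (T : topologicalType) (n : nat)
    (A : cplx_atlas R T n) : Prop :=
  (forall i, open (chart_dom A i)) /\
  (forall x : T, exists i, chart_dom A i x) /\
  (forall i x, chart_dom A i x -> {for x, continuous (chart_map A i)}) /\
  (forall i x y, chart_dom A i x -> chart_dom A i y ->
     chart_map A i x = chart_map A i y -> x = y) /\
  (forall i (V : set T), open V -> V `<=` chart_dom A i ->
     open (chart_map A i @` V)) /\
  (forall i j, exists g : Cn R n -> Cn R n,
     forall y, chart_dom A i y -> chart_dom A j y ->
       g (chart_map A i y) = chart_map A j y /\
       differentiable g (chart_map A i y)).

Definition compact_complex_manifold (R : realType) (T : topologicalType) (n : nat)
    (A : cplx_atlas R T n) : Prop :=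
  hausdorff_space T /\ compact [set: T] /\ is_cplx_atlas A.

Definition holo_disk_map (R : realType) (T : topologicalType) (n : nat)
    (A : cplx_atlas R T n) (f : (R[i])^o -> T) : Prop :=
  (forall z, unit_disk R z -> {for z, continuous f}) /\
  (forall i, exists g : (R[i])^o -> Cn R n,
     forall z, unit_disk R z -> chart_dom A i (f z) ->
       g z = chart_map A i (f z) /\ differentiable g z).

Definition pseudometric (R : realType) (T : Type) (d : T -> T -> \bar R) : Prop :=
  (forall x, d x x = 0%E) /\
  (forall x y, (0 <= d x y)%E) /\
  (forall x y, d x y = d y x) /\
  (forall x y z, (d x z <= d x y + d y z)%E).

Definition kobayashi_admissible (R : realType) (T : topologicalType) (n : nat)
    (A : cplx_atlas R T n) (d : T -> T -> \bar R) : Prop :=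
  pseudometric d /\
  forall f, holo_disk_map A f ->
    forall z w, unit_disk R z -> unit_disk R w ->
      (d (f z) (f w) <= (poincare_dist z w)%:E)%E.

(* The Kobayashi pseudodistance: the largest admissible pseudometric, i.e. the
   pointwise supremum of all admissible ones. *)
Definition kobayashi (R : realType) (T : topologicalType) (n : nat)
    (A : cplx_atlas R T n) (x y : T) : \bar R :=
  ereal_sup [set d x y | d in kobayashi_admissible A].

From HB Require Import structures.
From mathcomp Require Import all_boot all_order all_algebra.
From mathcomp Require Import all_classical all_reals all_analysis.
From mathcomp Require Import complex.
From mathcomp Require Import ring lra.
Import Order.TTheory GRing.Theory Num.Theory numFieldNormedType.Exports.
Local Open Scope ring_scope.
Local Open Scope classical_set_scope.

(* Small complex lines in a chart are holomorphic disks, so d_M(p, q) -> 0 as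
   q -> p; with the triangle inequality, d_M(x, .) is lower semicontinuous and
   M_x is closed.  If B is a nonempty relatively clopen part of M_x containing
   u, normality of the compact space M separates B from M_x \ B by disjoint
   open sets U and V, and compactness yields d > 0 such that d_M(u, .) < d only
   on U and V.  Let h be d - d_M(u, .) where this is positive on U, and 0
   elsewhere.  Along a holomorphic disk h is 1-Lipschitz for the Poincare
   distance: the image of a chord of the disk is connected and cannot jump from
   U to V while d_M(u, .) stays below d.  So |h p - h q| is an admissible
   pseudometric, whence d_M(u, v) >= d for v in M_x \ B, although
   d_M(u, v) <= d_M(u, x) + d_M(x, v) = 0. *)

Set Implicit Arguments.
Unset Strict Implicit.

Lemma lte_EFin_dense (R : realType) (a : R) (u : \bar R) : (a%:E < u)%E ->
  exists2 b : R, a < b & (b%:E < u)%E.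
Proof.
case: u => [r||] //=; last by exists (a + 1); rewrite ?ltry //; lra.
by rewrite lte_fin => ar; exists ((a + r) / 2); rewrite ?lte_fin; lra.
Qed.

Lemma pinv_continuous (X Y : topologicalType) (dflt : Y -> X) (V : set X)
    (phi : X -> Y) :
  {in V &, injective phi} -> open V ->
  (forall U, open U -> U `<=` V -> open (phi @` U)) ->
  forall a, V a -> {for phi a, continuous ('pinv_dflt V phi)}.
Proof.
move=> inj oV omap a Va U /=; rewrite pinvKV ?inE // nbhsE /=.
move=> [W [oW Wa] WU].
have : nbhs (phi a) (phi @` (W `&` V)).
  apply: open_nbhs_nbhs; split; last by exists a.
  by apply: omap; [exact: openI | exact: subIsetr].
apply: filterS => _ [b [Wb Vb] <-] /=; rewrite pinvKV ?inE //; exact: WU.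
Qed.

Lemma open_disjoint_separated (X : topologicalType) (U V : set X) :
  open U -> open V -> U `&` V = set0 -> separated U V.
Proof.
move=> oU oV UV0; have closure_sub W W' : open W' -> W `&` W' = set0 ->
    closure W `&` W' = set0.
  move=> oW' WW0; apply/disjoints_subset.
  have -> : ~` W' = closure (~` W') by apply/closure_id; exact: open_closedC.
  by apply: closureS; apply/disjoints_subset.
by split; [exact: closure_sub | rewrite setIC closure_sub // setIC].
Qed.

Lemma normal_separate_clopen (X : topologicalType) (S B : set X) :
  normal_space X -> closed S ->
  (exists2 C, open C & B = S `&` C) -> (exists2 C, closed C & B = S `&` C) ->
  exists U V, [/\ open U, open V, U `&` V = set0, B `<=` U & S `\` B `<=` V].
Proof.
move=> nX cS [C1 oC1 BC1] [C2 cC2 BC2].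
have cB : closed B by rewrite BC2; exact: closedI.
have cSB : closed (S `\` B).
  by rewrite BC1 setDIr setDv set0U; apply: closedI => //; exact: open_closedC.
have : set_nbhs B (~` (S `\` B)).
  by apply/set_nbhsP; exists (~` (S `\` B)); split=> // [|y By []//];
    exact: closed_openC.
case/(nX B cB) => U /set_nbhsP[W [oW BW WU]] clU.
exists W, (~` closure U); split=> //.
- exact/closed_openC/closed_closure.
- by apply/disjoints_subset => y /WU /subset_closure Uy /(_ Uy).
- by move=> y SBy /clU; apply.
Qed.

Lemma lsc_sublevel_subset (X : topologicalType) (R : realType)
    (g : X -> \bar R) (O : set X) :
  compact [set: X] -> lower_semicontinuous g -> open O ->
  (forall p, (g p <= 0)%E -> O p) ->
  exists2 d : R, 0 < d & forall p, (g p < d%:E)%E -> O p.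
Proof.
move=> cX lsc_g oO zeroO.
have cF : compact (~` O) := subclosed_compact (open_closedC oO) cX (@subsetT _ _).
have cover p : (~` O) p -> \forall q \near p & d \near (0 : R)^'+, (d%:E < g q)%E.
  move=> Fp; have /lte_EFin_dense[b b0 bp] : (0%:E < g p)%E.
    by rewrite ltNge; apply/negP => /zeroO.
  have [W pW Wb] : exists2 W, nbhs p W & forall q, W q -> ((b / 2)%:E < g q)%E.
    by apply: lsc_g; apply: lt_trans bp; rewrite lte_fin; lra.
  exists (W, [set d : R | d < b / 2]).
    by split=> //; apply: nbhs_right_lt; rewrite divr_gt0.
  by move=> [q d] /= [Wq db]; apply: lt_trans (Wb q Wq); rewrite lte_fin.
have := (compact_near_coveringP _).1 cF R _ _ (at_right_proper_filter 0) cover.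
move=> /(filterI (nbhs_right_gt 0)) /filter_ex[d [d0 dF]].
exists d => // p gpd; apply: contrapT => /dF; rewrite ltNge => /negP; apply.
exact: ltW.
Qed.

Section PoincareDisk.
Local Open Scope complex_scope.
Variable R : realType.
Local Notation nc := (@Normc.normc R).
Implicit Types (z w : R[i]) (s t : R).

Lemma normc_ge0 z : 0 <= nc z.
Proof. by case: z => a b; exact: sqrtr_ge0. Qed.

Lemma sqr_normcE z : nc z ^+ 2 = complex.Re z ^+ 2 + complex.Im z ^+ 2.
Proof. by case: z => a b /=; rewrite sqr_sqrtr // addr_ge0 // sqr_ge0. Qed.

Lemma normc_lt_sqr z w : (nc z < nc w) = (nc z ^+ 2 < nc w ^+ 2).
Proof. by rewrite ltr_pXn2r // nnegrE normc_ge0. Qed.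

Lemma normc_lt1 z : (nc z < 1) = (complex.Re z ^+ 2 + complex.Im z ^+ 2 < 1).
Proof.
by rewrite -{1}Normc.normc1 normc_lt_sqr !sqr_normcE /= expr0n addr0 expr1n.
Qed.

Lemma normc_real t : 0 <= t -> nc t%:C = t.
Proof. by move=> t0; rewrite /= expr0n /= addr0 sqrtr_sqr ger0_norm. Qed.

Lemma normc_sub_lt_normc_1subJM z w : nc z < 1 -> nc w < 1 ->
  nc (z - w) < nc (1 - w^* * z).
Proof.
rewrite !normc_lt1 normc_lt_sqr !sqr_normcE.
case: z => a b; case: w => c d /= hz hw; simpc.
nra.
Qed.

Definition segment z w s : R[i] := z + s%:C * (w - z).

Lemma segment0 z w : segment z w 0 = z.
Proof. by rewrite /segment mul0r addr0. Qed.

Lemma segment1 z w : segment z w 1 = w.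
Proof. by rewrite /segment mul1r addrC subrK. Qed.

Lemma segment_disk z w s : nc z < 1 -> nc w < 1 -> 0 <= s <= 1 ->
  nc (segment z w s) < 1.
Proof.
move=> + + /andP[s0 s1]; rewrite !normc_lt1 /segment.
case: z => a b; case: w => c d /= hz hw; simpc.
have convex : (a + s * (c - a)) ^+ 2 + (b + s * (d - b)) ^+ 2 =
    (1 - s) * (a ^+ 2 + b ^+ 2) + s * (c ^+ 2 + d ^+ 2)
    - s * (1 - s) * ((a - c) ^+ 2 + (b - d) ^+ 2) by ring.
rewrite convex.
have : 0 <= s * (1 - s) * ((a - c) ^+ 2 + (b - d) ^+ 2).
  by rewrite mulr_ge0 ?addr_ge0 ?sqr_ge0 // mulr_ge0 // subr_ge0.
have : (1 - s) * (a ^+ 2 + b ^+ 2) + s * (c ^+ 2 + d ^+ 2)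
    <= Num.max (a ^+ 2 + b ^+ 2) (c ^+ 2 + d ^+ 2).
  have : a ^+ 2 + b ^+ 2 <= Num.max (a ^+ 2 + b ^+ 2) (c ^+ 2 + d ^+ 2).
    by rewrite le_max lexx.
  have : c ^+ 2 + d ^+ 2 <= Num.max (a ^+ 2 + b ^+ 2) (c ^+ 2 + d ^+ 2).
    by rewrite le_max lexx orbT.
  nra.
have : Num.max (a ^+ 2 + b ^+ 2) (c ^+ 2 + d ^+ 2) < 1 by rewrite gt_max hz hw.
lra.
Qed.

Definition pseudo_hyperbolic z w : R := nc (z - w) / nc (1 - w^* * z).

Lemma pseudo_hyperbolic_bounds z w : nc z < 1 -> nc w < 1 ->
  0 <= pseudo_hyperbolic z w < 1.
Proof.
move=> hz hw; have lt := normc_sub_lt_normc_1subJM hz hw.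
have den0 : 0 < nc (1 - w^* * z) by apply: le_lt_trans lt; exact: normc_ge0.
by rewrite divr_ge0 ?normc_ge0 //= ltr_pdivrMr // mul1r.
Qed.

Lemma pseudo_hyperbolicC z w : pseudo_hyperbolic z w = pseudo_hyperbolic w z.
Proof.
rewrite /pseudo_hyperbolic -normcN opprB; congr (_ / _).
case: z => a b; case: w => c d /=; simpc; congr Num.sqrt; ring.
Qed.

Lemma pseudo_hyperbolic0r t : 0 <= t -> pseudo_hyperbolic 0 t%:C = t.
Proof.
move=> t0; rewrite /pseudo_hyperbolic mulr0 subr0 sub0r normcN.
by rewrite Normc.normc1 divr1 normc_real.
Qed.

(* Moving w towards z along the chord scales |z - w| by s, but shrinks
   |1 - conj(w) z| by less. *)
Lemma pseudo_hyperbolic_segment z w s : nc z < 1 -> nc w < 1 -> 0 <= s <= 1 ->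
  pseudo_hyperbolic z (segment z w s) <= pseudo_hyperbolic z w.
Proof.
move=> hz hw hs; have /andP[s0 s1] := hs.
have den_pos v : nc v < 1 -> 0 < nc (1 - v^* * z).
  move=> hv; apply: le_lt_trans (normc_sub_lt_normc_1subJM hz hv).
  exact: normc_ge0.
have num : nc (z - segment z w s) = s * nc (z - w).
  apply/eqP; rewrite -(eqrXn2 (_ : 0 < 2)%N) ?normc_ge0 ?mulr_ge0 ?normc_ge0 //.
  rewrite exprMn !sqr_normcE /segment.
  by case: z {hz den_pos} => a b; case: w {hw} => c d /=; simpc; apply/eqP; ring.
have den : s * nc (1 - w^* * z) <= nc (1 - (segment z w s)^* * z).
  rewrite -(ler_pXn2r (_ : 0 < 2)%N) ?nnegrE ?mulr_ge0 ?normc_ge0 //.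
  rewrite exprMn !sqr_normcE /segment.
  move: hz hw; rewrite !normc_lt1.
  case: z {den_pos num} => a b; case: w => c d /= hz hw; simpc.
  set u := a + s * (c - a); set v := b + s * (d - b).
  set X := (1 - s) * (1 - (a ^+ 2 + b ^+ 2)); set Y := 1 - (c * a + d * b).
  have -> : 1 + (- (v * b) - u * a) = X + s * Y by rewrite /u /v /X /Y; ring.
  have -> : - (u * b) + v * a = s * (d * a - c * b) by rewrite /u /v; ring.
  have -> : 1 + (- (d * b) - c * a) = Y by rewrite /Y; ring.
  have X0 : 0 <= X by rewrite /X; apply: mulr_ge0; lra.
  have Y0 : 0 <= Y.
    by rewrite /Y; have := sqr_ge0 (a - c); have := sqr_ge0 (b - d); nra.
  have := mulr_ge0 X0 (mulr_ge0 s0 Y0).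
  nra.
rewrite /pseudo_hyperbolic num ler_pdivrMr ?den_pos ?segment_disk //.
rewrite mulrAC ler_pdivlMr ?den_pos // mulrAC [X in _ <= X]mulrC.
by apply: ler_wpM2r; first exact: normc_ge0.
Qed.

End PoincareDisk.

Section TwoArtanh.
Variable R : realType.
Implicit Types (t e : R).

Definition two_artanh t : R := ln ((1 + t) / (1 - t)).

Lemma two_artanh_le t1 t2 : 0 <= t1 -> t1 <= t2 -> t2 < 1 ->
  two_artanh t1 <= two_artanh t2.
Proof.
move=> t10 t12 t21; rewrite /two_artanh ler_ln ?posrE ?divr_gt0 //; try lra.
rewrite ler_pdivrMr; last lra.
rewrite mulrAC ler_pdivlMr; last lra.
nra.
Qed.

Lemma two_artanh_ge0 t : 0 <= t < 1 -> 0 <= two_artanh t.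
Proof.
move=> /andP[t0 t1]; have := two_artanh_le (lexx 0) t0 t1.
by rewrite /two_artanh subr0 addr0 divr1 ln1.
Qed.

Definition tanh_half e : R := (expR e - 1) / (expR e + 1).

Lemma tanh_half_bounds e : 0 < e -> 0 < tanh_half e < 1.
Proof.
move=> e0; have e1 : 1 < expR e by rewrite expR_gt1.
by rewrite divr_gt0 ?ltr_pdivrMr /=; lra.
Qed.

Lemma two_artanhK e : two_artanh (tanh_half e) = e.
Proof.
have e0 := expR_gt0 e; rewrite /two_artanh /tanh_half.
have -> : (1 + (expR e - 1) / (expR e + 1)) / (1 - (expR e - 1) / (expR e + 1))
    = expR e by field; lra.
exact: expRK.
Qed.

End TwoArtanh.

Section PoincareDistance.
Local Open Scope complex_scope.
Variable R : realType.
Implicit Types (z w : (R[i])^o) (s t : R).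

Lemma poincare_distE z w : poincare_dist z w = two_artanh (pseudo_hyperbolic z w).
Proof. by []. Qed.

Lemma poincare_dist_ge0 z w : unit_disk R z -> unit_disk R w ->
  0 <= poincare_dist z w.
Proof. by move=> hz hw; apply/two_artanh_ge0/pseudo_hyperbolic_bounds. Qed.

Lemma poincare_distC z w : poincare_dist z w = poincare_dist w z.
Proof. by rewrite !poincare_distE pseudo_hyperbolicC. Qed.

Lemma poincare_dist0r t : 0 <= t -> poincare_dist 0 t%:C = two_artanh t.
Proof. by move=> t0; rewrite poincare_distE pseudo_hyperbolic0r. Qed.

Lemma unit_disk0 : unit_disk R 0.
Proof. by rewrite /unit_disk /= expr0n /= addr0 sqrtr0. Qed.

Lemma unit_disk_real t : 0 <= t < 1 -> unit_disk R t%:C.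
Proof. by move=> /andP[t0 t1]; rewrite /unit_disk /mkset normc_real. Qed.

Lemma unit_disk_segment z w s : unit_disk R z -> unit_disk R w -> 0 <= s <= 1 ->
  unit_disk R (segment z w s).
Proof. exact: segment_disk. Qed.

Lemma unit_disk_norm z : unit_disk R z -> `|(z : R[i])| < 1.
Proof. by case: z => a b hz; rewrite normc_def -[1]/(1%:C) ltcR. Qed.

Lemma poincare_dist_segment z w s : unit_disk R z -> unit_disk R w -> 0 <= s <= 1 ->
  poincare_dist z (segment z w s) <= poincare_dist z w.
Proof.
move=> hz hw hs; have hzs := unit_disk_segment hz hw hs.
have /andP[p0 _] := pseudo_hyperbolic_bounds hz hzs.
have /andP[_ p1] := pseudo_hyperbolic_bounds hz hw.
by apply: two_artanh_le => //; exact: pseudo_hyperbolic_segment.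
Qed.

Lemma continuous_real_complex : continuous (fun t : R => (t%:C : (R[i])^o)).
Proof.
move=> t; apply/cvgrPdist_lt => eps eps0.
have [/eqP eps_real eps_pos] : complex.Im eps == 0 /\ 0 < complex.Re eps.
  by move: eps0; rewrite ltcE /= => /andP[].
apply: filterS (nbhsx_ballx t _ eps_pos) => t'; rewrite -ball_normE /= => tt'.
rewrite -rmorphB normc_def /= expr0n addr0 sqrtr_sqr.
by rewrite [X in _ < X]complexE eps_real mulr0 addr0 ltcR.
Qed.

Lemma continuous_segment z w : continuous (segment z w : R -> (R[i])^o).
Proof.
move=> s; apply: continuousD; first exact: cst_continuous.
by apply: continuousZr_tmp; exact: continuous_real_complex.
Qed.

End PoincareDistance.

Lemma connected_holo_chord (R : realType) (T : topologicalType) (n : nat)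
    (A : cplx_atlas R T n) f (z w : (R[i])^o) :
  holo_disk_map A f -> unit_disk R z -> unit_disk R w ->
  connected ((f \o segment z w) @` `[0, 1]).
Proof.
move=> [cont_f _] hz hw.
apply: connected_continuous_connected; first exact: segment_connected.
apply: continuous_in_subspaceT => s; rewrite inE /= in_itv /= => s01.
apply: continuous_comp; first exact: continuous_segment.
by apply: cont_f; exact: unit_disk_segment.
Qed.

Section KobayashiPseudometric.
Variables (R : realType) (T : topologicalType) (n : nat) (A : cplx_atlas R T n).
Local Notation K := (kobayashi A).
Local Open Scope ereal_scope.

Lemma kobayashi_admissible0 : kobayashi_admissible A (fun _ _ => 0).
Proof.
split; first by do 3 split=> //; move=> *; rewrite adde0.
by move=> f _ z w hz hw; rewrite lee_fin; exact: poincare_dist_ge0.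
Qed.

Lemma kobayashi_ge d x y : kobayashi_admissible A d -> d x y <= K x y.
Proof. by move=> hd; apply: ereal_sup_ubound; exists d. Qed.

Lemma kobayashi_le x y (c : \bar R) :
  (forall d, kobayashi_admissible A d -> d x y <= c) -> K x y <= c.
Proof. by move=> h; apply: ge_ereal_sup => _ [d hd <-]; exact: h. Qed.

Lemma kobayashi_ge0 x y : 0 <= K x y.
Proof. exact: kobayashi_ge kobayashi_admissible0. Qed.

Lemma kobayashi_xx x : K x x = 0.
Proof.
apply/eqP; rewrite eq_le kobayashi_ge0 andbT.
by apply: kobayashi_le => d [[dxx _] _]; rewrite dxx.
Qed.

Lemma kobayashiC x y : K x y = K y x.
Proof.
by apply/eqP; rewrite eq_le; apply/andP; split; apply: kobayashi_le =>
  d hd; case: (hd) => [[_ [_ [-> _]]] _]; exact: kobayashi_ge.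
Qed.

Lemma kobayashi_triangle x y z : K x z <= K x y + K y z.
Proof.
apply: kobayashi_le => d hd; case: (hd) => [[_ [_ [_ dtri]]] _].
by apply: le_trans (dtri x y z) _; apply: leeD; exact: kobayashi_ge.
Qed.

Lemma kobayashi_eq0_eq x u y : K x u = 0 -> K u y = K x y.
Proof.
move=> xu0; apply/eqP; rewrite eq_le; apply/andP; split.
  by have := kobayashi_triangle u x y; rewrite (kobayashiC u x) xu0 add0e.
by have := kobayashi_triangle x u y; rewrite xu0 add0e.
Qed.

Lemma kobayashi_holo f z w : holo_disk_map A f -> unit_disk R z -> unit_disk R w ->
  K (f z) (f w) <= (poincare_dist z w)%:E.
Proof. by move=> hf hz hw; apply: kobayashi_le => d [_ dhol]; exact: dhol. Qed.

Lemma kobayashi_holo_real f (t : R) : holo_disk_map A f -> (0 <= t < 1)%R ->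
  K (f 0%R) (f (t%:C)%C) <= (two_artanh t)%:E.
Proof.
move=> hf /[dup] /andP[t0 _] ht.
by rewrite -poincare_dist0r //; apply: kobayashi_holo => //;
  [exact: unit_disk0 | exact: unit_disk_real].
Qed.

End KobayashiPseudometric.

Section ChartDisks.
Variables (R : realType) (T : topologicalType) (n : nat) (A : cplx_atlas R T n).
Hypothesis hA : is_cplx_atlas A.
Local Notation K := (kobayashi A).

(* [p0] is the junk value off the image of the chart. *)
Definition chart_inv (i : chart_index A) (p0 : T) : Cn R n -> T :=
  'pinv_(fun=> p0) (chart_dom A i) (chart_map A i).

Lemma chart_injective i : {in chart_dom A i &, injective (chart_map A i)}.
Proof. by case: hA => _ [_ [_ [inj _]]] a b; rewrite !inE; exact: inj. Qed.

Lemma chart_invK i p0 a : chart_dom A i a -> chart_inv i p0 (chart_map A i a) = a.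
Proof. by move=> ia; rewrite /chart_inv pinvKV ?inE //; exact: chart_injective. Qed.

Lemma continuous_chart_inv i p0 a : chart_dom A i a ->
  {for chart_map A i a, continuous (chart_inv i p0)}.
Proof.
case: hA => oV [_ [_ [_ [omap _]]]].
move=> ia; rewrite /chart_inv.
exact (pinv_continuous (dflt := fun=> p0) (@chart_injective i) (oV i) (omap i) ia).
Qed.

Lemma differentiable_affine_line (c w : Cn R n) (z : (R[i])^o) :
  differentiable (fun zeta : (R[i])^o => c + (zeta : R[i]) *: w) z.
Proof.
apply: differentiableD; first exact: differentiable_cst.
by apply: (@differentiableZl _ _ _ (fun zeta : (R[i])^o => (zeta : R[i]))).
Qed.

Lemma holo_chart_disk i p0 (c w : Cn R n) (r : R[i]) : 0 < r ->
  ball c r `<=` chart_map A i @` chart_dom A i -> `|w| <= r ->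
  holo_disk_map A (fun z : (R[i])^o => chart_inv i p0 (c + (z : R[i]) *: w)).
Proof.
move=> r0 cr wr; set ell := fun zeta : (R[i])^o => c + (zeta : R[i]) *: w.
have ell_chart z : unit_disk R z -> (chart_map A i @` chart_dom A i) (ell z).
  move=> hz; apply: cr; rewrite -ball_normE /= /ell opprD addrA subrr sub0r normrN.
  rewrite normrZ (le_lt_trans (ler_wpM2l (normr_ge0 _) wr)) // gtr_pMl //.
  exact: unit_disk_norm.
split.
  move=> z /ell_chart[a ia eq_a].
  apply: (continuous_comp (f := ell) (g := chart_inv i p0)).
    exact/differentiable_continuous/differentiable_affine_line.
  by rewrite -eq_a; exact: continuous_chart_inv.
move=> j; case: hA => _ [_ [_ [_ [_ htr]]]]; have [g hg] := htr i j.
exists (g \o ell) => z /ell_chart[a ia eq_a].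
rewrite -/(ell z) -eq_a chart_invK // => ja; have [<- dg] := hg a ia ja.
split; first by rewrite /= eq_a.
apply: differentiable_comp; first exact: differentiable_affine_line.
by rewrite -eq_a.
Qed.

Lemma kobayashi_near p (e : R) : 0 < e -> \forall q \near p, (K p q <= e%:E)%E.
Proof.
move=> e0; case: (hA) => oV [cover [cont [_ [omap _]]]].
have [i ip] := cover p; set V := chart_dom A i; set phi := chart_map A i.
have [t0 t1] := andP (tanh_half_bounds e0); set t := tanh_half e in t0 t1.
have tC0 : 0 < t%:C%C :> R[i] by rewrite ltcR.
have [r r0 ball_r] : exists2 r : R[i], 0 < r & ball (phi p) r `<=` phi @` V.
  have : nbhs (phi p) (phi @` V).
    by apply: open_nbhs_nbhs; split; [exact: (omap i V (oV i)) | exists p].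
  by move/nbhs_ballP => [r r0 ?]; exists r.
have near_q : \forall q \near p, V q /\ ball (phi p) (t%:C%C * r) (phi q).
  apply: filterI; first by apply: open_nbhs_nbhs; split; [exact: oV | exact: ip].
  (* stated for an abstract B: unifying continuity with a concrete ball is very slow *)
  have cont_preimage B : nbhs (phi p) B -> \forall q \near p, B (phi q).
    exact: (cont i p ip).
  by apply: cont_preimage; apply: nbhsx_ballx; exact: mulr_gt0.
apply: filterS near_q => q [iq pq].
(* the disk zeta |-> phi^-1 (phi p + zeta w) sends 0 to p and t to q *)
set w := (t%:C%C)^-1 *: (phi q - phi p).
have wr : `|w| <= r.
  rewrite normrZ normfV gtr0_norm // ler_pdivrMl // distrC.
  by move: pq; rewrite -ball_normE /= => /ltW.
have t01 : 0 <= t < 1 by rewrite (ltW t0) t1.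
have := kobayashi_holo_real (holo_chart_disk p r0 ball_r wr) t01.
rewrite /w scale0r addr0 scalerA mulfV ?gt_eqF // scale1r addrC subrK.
by rewrite !chart_invK // two_artanhK.
Qed.

Lemma kobayashi_lsc x : lower_semicontinuous (kobayashi A x).
Proof.
move=> p a /lte_EFin_dense[b ab bp].
exists [set q | (K p q <= (b - a)%:E)%E].
  by apply: kobayashi_near; rewrite subr_gt0.
move=> q /= pq; rewrite ltNge; apply/negP => qa.
have : (K x p <= b%:E)%E.
  apply: le_trans (kobayashi_triangle A x q p) _.
  by rewrite (kobayashiC A q p) -[b](subrK a) EFinD addeC leeD.
by rewrite leNgt bp.
Qed.

Lemma closed_kobayashi_eq0 x : closed [set y | kobayashi A x y = 0%E].
Proof.
have -> : [set y | K x y = 0%E] = ~` [set y | (0%:E < K x y)%E].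
  apply/seteqP; split=> y /=; first by move=> ->; rewrite ltxx.
  by move/negP; rewrite lt_def kobayashi_ge0 andbT negbK => /eqP.
by apply: open_closedC; exact: (lower_semicontinuousP _).1 (@kobayashi_lsc x) 0.
Qed.

End ChartDisks.

Section Separation.
Variables (R : realType) (T : topologicalType) (n : nat) (A : cplx_atlas R T n).
Local Notation K := (kobayashi A).
Variables (u : T) (d : R) (U V : set T).
Hypotheses (d0 : 0 < d) (oU : open U) (oV : open V) (UV0 : U `&` V = set0).
Hypothesis sublevelUV : forall p, (K u p < d%:E)%E -> (U `|` V) p.

Definition bump_support q := U q /\ (K u q < d%:E)%E.

Definition bump q : R := if pselect (bump_support q) then d - fine (K u q) else 0.

Lemma bump_supportE q : bump_support q ->
  K u q = (fine (K u q))%:E /\ 0 <= fine (K u q) < d.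
Proof.
move=> [_ uq]; have uq0 := kobayashi_ge0 A u q.
have uq_fin : K u q \is a fin_num by rewrite ge0_fin_numE // (lt_trans uq) ?ltry.
split; first by rewrite fineK.
by rewrite -lee_fin -lte_fin fineK // uq0.
Qed.

(* Otherwise f maps the chord [z, w] into {K u < d}, so its connected image
   stays in U and f w would lie in the support. *)
Lemma bump_exit_le f z w : holo_disk_map A f -> unit_disk R z -> unit_disk R w ->
  bump_support (f z) -> ~ bump_support (f w) ->
  d - fine (K u (f z)) <= poincare_dist z w.
Proof.
move=> hf hz hw fz nfw; have [Kfz _] := bump_supportE fz.
rewrite leNgt; apply/negP => short.
have chord_sub s : 0 <= s <= 1 -> (K u (f (segment z w s)) < d%:E)%E.
  move=> s01; apply: le_lt_trans (kobayashi_triangle A u (f z) _) _.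
  have := poincare_dist_segment hz hw s01.
  have := kobayashi_holo hf hz (unit_disk_segment hz hw s01).
  rewrite Kfz => Kfs seg_le; apply: le_lt_trans (leeD (lexx _) Kfs) _.
  by rewrite -EFinD lte_fin; lra.
have chordUV : (f \o segment z w) @` `[0, 1] `<=` U `|` V.
  by move=> _ [s s01 <-]; apply/sublevelUV/chord_sub; move: s01; rewrite /= in_itv.
have [chordU|chordV] := connected_subset (open_disjoint_separated oU oV UV0)
  chordUV (connected_holo_chord hf hz hw).
- apply: nfw; split.
    by apply: chordU; exists 1; rewrite /= ?segment1 // in_itv /= lexx ler01.
  by rewrite -(segment1 z w); apply: chord_sub; rewrite lexx ler01.
- suff : (U `&` V) (f z) by rewrite UV0.
  split; first by case: fz.
  by apply: chordV; exists 0; rewrite /= ?segment0 // in_itv /= lexx ler01.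
Qed.

Lemma bump_lipschitz f z w : holo_disk_map A f -> unit_disk R z -> unit_disk R w ->
  `|bump (f z) - bump (f w)| <= poincare_dist z w.
Proof.
move=> hf hz hw; rewrite /bump.
case: pselect => fz; case: pselect => fw /=.
- have [Kfz _] := bump_supportE fz; have [Kfw _] := bump_supportE fw.
  have t1 := kobayashi_triangle A u (f z) (f w); have h1 := kobayashi_holo hf hz hw.
  have t2 := kobayashi_triangle A u (f w) (f z); have h2 := kobayashi_holo hf hw hz.
  rewrite poincare_distC in h2; rewrite Kfz Kfw in t1 t2.
  have := le_trans t1 (leeD (lexx _) h1); have := le_trans t2 (leeD (lexx _) h2).
  by rewrite -!EFinD !lee_fin ler_norml; lra.
- have [_ /andP[_ fzd]] := bump_supportE fz.
  by rewrite subr0 ger0_norm ?subr_ge0 ?(ltW fzd) //; exact: bump_exit_le.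
- have [_ /andP[_ fwd]] := bump_supportE fw.
  rewrite sub0r normrN ger0_norm ?subr_ge0 ?(ltW fwd) // poincare_distC.
  exact: bump_exit_le.
- by rewrite subrr normr0; exact: poincare_dist_ge0.
Qed.

Lemma bump_admissible : kobayashi_admissible A (fun p q => (`|bump p - bump q|)%:E).
Proof.
split; last by move=> f hf z w hz hw; rewrite lee_fin; exact: bump_lipschitz.
split; first by move=> p; rewrite subrr normr0.
split; first by move=> p q; rewrite lee_fin.
split; first by move=> p q; rewrite distrC.
by move=> p q r; rewrite -EFinD lee_fin ler_distD.
Qed.

Lemma kobayashi_separation v : U u -> ~ U v -> (d%:E <= K u v)%E.
Proof.
move=> Uu nUv; apply: le_trans (kobayashi_ge u v bump_admissible).
have su : bump_support u by split => //; rewrite kobayashi_xx lte_fin.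
rewrite /bump; case: pselect => [su'|/(_ su)//]; case: pselect => [[/nUv]//|nsv] /=.
by rewrite kobayashi_xx /= !subr0 ger0_norm ?(ltW d0).
Qed.

End Separation.

Unset Implicit Arguments.
Set Strict Implicit.

Theorem mainTheorem9 (R : realType) (T : topologicalType) (n : nat)
    (A : cplx_atlas R T n) :
  compact_complex_manifold A ->
  forall x : T, connected [set y : T | kobayashi A x y = 0%E].
Proof.
move=> [hausT [cT hA]] x B [u Bu] openB closedB.
set S := [set y | kobayashi A x y = 0%E].
have BS : B `<=` S by case: openB => C _ ->; exact: subIsetl.
have Su : kobayashi A x u = 0%E := BS u Bu.
have [U [V [oU oV UV0 BU SBV]]] := normal_separate_clopen
  (compact_normal hausT cT) (closed_kobayashi_eq0 hA (x := x)) openB closedB.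
have [d d0 sublevel] : exists2 d : R, 0 < d &
    forall p, (kobayashi A u p < d%:E)%E -> (U `|` V) p.
  apply: lsc_sublevel_subset => //; first exact: (kobayashi_lsc hA (x := u)).
    exact: openU.
  move=> p; rewrite (kobayashi_eq0_eq _ Su) => Sp.
  have {}Sp : S p by apply/eqP; rewrite eq_le Sp kobayashi_ge0.
  by have [Bp|nBp] := pselect (B p); [left; exact: BU | right; exact: SBV].
apply/seteqP; split=> // v Sv; apply: contrapT => nBv.
have nUv : ~ U v.
  move=> Uv; suff : (U `&` V) v by rewrite UV0.
  by split; last exact: SBV.
have := kobayashi_separation d0 oU oV UV0 sublevel (BU u Bu) nUv.
by rewrite (kobayashi_eq0_eq _ Su) Sv lee_fin leNgt d0.
Qed.
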